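(* For every $\kappa\ge 2$, for the $\kappa$-state GM+I model on binary 4-taxon trees (the three trees $T_{ab|cd}$, $T_{ac|bd}$, $T_{ad|bc}$ on taxa $a,b,c,d$), the tree parameter is generically identifiable.
   Context: For a binary $n$-taxon tree $T$ (leaves labeled by the taxa, internal vertices of valence 3) with edge set $E$, the $\kappa$-state GM+I model has parameters $\mathbf s=(\delta,\pi_I,\pi_{GM},(M_e)_{e\in E})$: $\delta\in[0,1]$, probability vectors $\pi_I,\pi_{GM}\in[0,1]^\kappa$ ($\pi_{GM}$ the distribution at a chosen root $r$), and $\kappa\times\kappa$ Markov matrices $M_e$ for edges directed away from $r$. These form a stochastic parameter space $S_T\subseteq\mathbb R^N$, $N=2\kappa-1+|E|\kappa(\kappa-1)$. The joint leaf distribution $P=\phi_T(\mathbf s)$ has entries $p_{i_1\dots i_n}=\delta\,\epsilon(i_1,\dots,i_n)\pi_I(i_1)+(1-\delta)\sum_{(j_v)}\pi_{GM}(j_r)\prod_{e=(u\to w)}M_e(j_u,j_w)$, with $\epsilon=1$ if all indices equal and $0$ otherwise, the sum over all state assignments to vertices extending the leaf states. The tree parameter is generically identifiable for a collection of trees if for each tree $T$ there is a proper algebraic variety $X_T\subsetneq\mathbb C^N$ such that whenever $P\in\bigcup_T\phi_T(S_T\setminus X_T)$, there is a unique tree $T$ with $P\in\phi_T(S_T\setminus X_T)$. *)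

From HB Require Import structures.
From mathcomp Require Import all_boot all_order all_algebra.
From mathcomp Require Import reals.
From mathcomp Require Import complex.
From mathcomp Require mpoly.

Set Implicit Arguments.
Unset Strict Implicit.
Unset Printing Implicit Defensive.

Import Order.TTheory GRing.Theory Num.Theory.
Local Open Scope ring_scope.

(* Taxa a,b,c,d are 0,1,2,3 : 'I_4.
   The three trees are indexed by t : 'I_3 :
     t = 0 : T_{ab|cd},  t = 1 : T_{ac|bd},  t = 2 : T_{ad|bc}.
   Each tree has internal vertices u, v; the cherry {x,y} hangs at u,
   the cherry {z,w} at v.  The root r is u and the five edges, directed
   away from the root, are labelled by 'I_5:
     e0 : u -> x,  e1 : u -> y,  e2 : v -> z,  e3 : v -> w,  e4 : u -> v. *)

Definition taxon (n : nat) : 'I_4 := inord n.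

(* (x, y, z, w) for the tree t : the split is xy | zw *)
Definition tree_leaves (t : 'I_3) : 'I_4 * 'I_4 * 'I_4 * 'I_4 :=
  match val t with
  | 0 => (taxon 0, taxon 1, taxon 2, taxon 3)
  | 1 => (taxon 0, taxon 2, taxon 1, taxon 3)
  | _ => (taxon 0, taxon 3, taxon 1, taxon 2)
  end.

Definition edge (n : nat) : 'I_5 := inord n.

Record gmi_param (R : realType) (kappa : nat) := GMIParam {
  gmi_delta : R;
  gmi_piI   : 'I_kappa -> R;
  gmi_piGM  : 'I_kappa -> R;          (* distribution at the root u *)
  gmi_M     : 'I_5 -> 'I_kappa -> 'I_kappa -> R
}.

Definition prob_vector (R : realType) (kappa : nat) (p : 'I_kappa -> R) : Prop :=
  (forall i, 0 <= p i) /\ \sum_(i < kappa) p i = 1.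

Definition stochastic (R : realType) (kappa : nat) (s : gmi_param R kappa) : Prop :=
  0 <= gmi_delta s <= 1 /\
  prob_vector (gmi_piI s) /\ prob_vector (gmi_piGM s) /\
  (forall e i, prob_vector (gmi_M s e i)).

(* Free coordinates (the ambient space R^N, N = 2 kappa - 1 + 5 kappa (kappa-1)).
   Coordinates: delta; pi_I(j), pi_GM(j) for j < kappa - 1;
   M_e(i, j) for all e, all i, and j < kappa - 1.  The remaining entries
   (the last state of each probability vector / row) are determined by
   the sum-to-one constraints. *)
Definition coord_index (kappa : nat) : finType :=
  (unit + ('I_kappa.-1 + ('I_kappa.-1 + ('I_5 * 'I_kappa * 'I_kappa.-1))))%type.

Definition free_state (kappa : nat) (j : 'I_kappa.-1) : 'I_kappa :=
  widen_ord (leq_pred kappa) j.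

Definition coords (R : realType) (kappa : nat) (s : gmi_param R kappa)
  (c : coord_index kappa) : R :=
  match c with
  | inl _ => gmi_delta s
  | inr (inl j) => gmi_piI s (free_state j)
  | inr (inr (inl j)) => gmi_piGM s (free_state j)
  | inr (inr (inr (e, i, j))) => gmi_M s e i (free_state j)
  end.

Definition Ndim (kappa : nat) : nat := #|coord_index kappa|.

Definition complex_point (R : realType) (kappa : nat) (s : gmi_param R kappa)
  : 'I_(Ndim kappa) -> R[i] :=
  fun n => (coords s (enum_val n))%:C%C.

Definition zero_set (R : realType) (n : nat) (F : mpoly.mpoly n R[i] -> Prop)
  : ('I_n -> R[i]) -> Prop :=
  fun x => forall p, F p -> mpoly.meval x p = 0.

Definition proper_variety (R : realType) (n : nat) (X : ('I_n -> R[i]) -> Prop)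
  : Prop :=
  (exists F : mpoly.mpoly n R[i] -> Prop, forall x, X x <-> zero_set F x) /\
  (exists x, ~ X x).

Definition gmi_dist (R : realType) (kappa : nat) (t : 'I_3)
  (s : gmi_param R kappa) : {ffun {ffun 'I_4 -> 'I_kappa} -> R} :=
  let: (x, y, z, w) := tree_leaves t in
  [ffun ii : {ffun 'I_4 -> 'I_kappa} =>
     gmi_delta s * (if [forall l, ii l == ii (taxon 0)] then 1 else 0)
       * gmi_piI s (ii (taxon 0))
     + (1 - gmi_delta s) *
       \sum_(ju < kappa) \sum_(jv < kappa)
         (gmi_piGM s ju * gmi_M s (edge 0) ju (ii x) * gmi_M s (edge 1) ju (ii y)
          * gmi_M s (edge 4) ju jv
          * gmi_M s (edge 2) jv (ii z) * gmi_M s (edge 3) jv (ii w))].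

Definition in_image_off (R : realType) (kappa : nat) (t : 'I_3)
  (X : ('I_(Ndim kappa) -> R[i]) -> Prop)
  (P : {ffun {ffun 'I_4 -> 'I_kappa} -> R}) : Prop :=
  exists s : gmi_param R kappa,
    stochastic s /\ ~ X (complex_point s) /\ gmi_dist t s = P.

Definition tree_generically_identifiable (R : realType) (kappa : nat) : Prop :=
  exists X : 'I_3 -> ('I_(Ndim kappa) -> R[i]) -> Prop,
    (forall t, proper_variety (X t)) /\
    forall P : {ffun {ffun 'I_4 -> 'I_kappa} -> R},
      (exists t, in_image_off t (X t) P) ->
      exists! t, in_image_off t (X t) P.

From mathcomp Require Import all_boot all_order all_algebra.
From mathcomp Require Import reals complex mpoly.

Set Implicit Arguments.
Unset Strict Implicit.
Unset Printing Implicit Defensive.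

Import Order.TTheory GRing.Theory Num.Theory.
Local Open Scope ring_scope.

(* Flatten a distribution along a split xy|zw into a kappa^2 x kappa^2 matrix.
   For a GM+I distribution of the tree with that split, the entries away from
   the constant state assignments come from the GM part alone, which factors
   through the kappa states of the internal edge; hence every (kappa+1)-minor
   avoiding those entries vanishes.  Let X_t be the common zero set of all
   products, over the two splits s <> t, of such minors along s of the
   polynomial parametrization of t.  Off X_t a distribution of t has a nonzero
   such minor along each other split, so it comes from no other tree.  X_t is
   proper: with delta = 0, a uniform transition matrix on the internal edge and
   identity or cyclic-shift matrices on the pendant edges, the two cherries are
   independent and every flattening along another split is a multiple of a
   permutation matrix. *)

Lemma taxon_eq (i j : nat) : (i < 4)%N -> (j < 4)%N -> (taxon i == taxon j) = (i == j).
Proof. by move=> hi hj; rewrite -val_eqE /= /taxon !inordK. Qed.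

Lemma edge_eq (i j : nat) : (i < 5)%N -> (j < 5)%N -> (edge i == edge j) = (i == j).
Proof. by move=> hi hj; rewrite -val_eqE /= /edge !inordK. Qed.

Definition leaf_x (t : 'I_3) : 'I_4 := (tree_leaves t).1.1.1.
Definition leaf_y (t : 'I_3) : 'I_4 := (tree_leaves t).1.1.2.
Definition leaf_z (t : 'I_3) : 'I_4 := (tree_leaves t).1.2.
Definition leaf_w (t : 'I_3) : 'I_4 := (tree_leaves t).2.

Section Flattenings.
Variable k : nat.
Implicit Types (t s : 'I_3) (p q : 'I_k * 'I_k).

Definition gmi_formula (K : pzRingType) t (delta : K) (piI piGM : 'I_k -> K)
    (M : 'I_5 -> 'I_k -> 'I_k -> K) (ii : {ffun 'I_4 -> 'I_k}) : K :=
  delta * (if [forall l, ii l == ii (taxon 0)] then 1 else 0) * piI (ii (taxon 0))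
  + (1 - delta) * \sum_(ju < k) \sum_(jv < k)
     (piGM ju * M (edge 0) ju (ii (leaf_x t)) * M (edge 1) ju (ii (leaf_y t))
      * M (edge 4) ju jv * M (edge 2) jv (ii (leaf_z t)) * M (edge 3) jv (ii (leaf_w t))).

Lemma gmi_distE (R : realType) t (s : gmi_param R k) ii :
  gmi_dist t s ii = gmi_formula t (gmi_delta s) (gmi_piI s) (gmi_piGM s) (gmi_M s) ii.
Proof.
rewrite /gmi_dist /gmi_formula /leaf_x /leaf_y /leaf_z /leaf_w.
by case: (tree_leaves t) => [[[x y] z] w] /=; rewrite ffunE.
Qed.

Lemma eq_gmi_formula (K : pzRingType) t (delta : K) piI piI' piGM piGM' M M' :
  piI =1 piI' -> piGM =1 piGM' -> (forall e i j, M e i j = M' e i j) ->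
  gmi_formula t delta piI piGM M =1 gmi_formula t delta piI' piGM' M'.
Proof.
move=> eI eGM eM ii; rewrite /gmi_formula eI; congr (_ + _ * _).
by apply: eq_bigr => ju _; apply: eq_bigr => jv _; rewrite eGM !eM.
Qed.

Lemma rmorph_gmi_formula (K K' : pzRingType) (f : {rmorphism K -> K'}) t delta
    piI piGM M ii :
  f (gmi_formula t delta piI piGM M ii) =
  gmi_formula t (f delta) (f \o piI) (f \o piGM) (fun e i j => f (M e i j)) ii.
Proof.
rewrite /gmi_formula rmorphD !rmorphM rmorphB rmorph1 (fun_if f) rmorph1 rmorph0.
rewrite rmorph_sum; congr (_ + _ * _); apply: eq_bigr => ju _.
by rewrite rmorph_sum; apply: eq_bigr => jv _; rewrite !rmorphM.
Qed.

Definition flat_index s p q : {ffun 'I_4 -> 'I_k} :=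
  [ffun l => if l == leaf_x s then p.1 else if l == leaf_y s then p.2
             else if l == leaf_z s then q.1 else q.2].

Lemma flat_indexE s p q :
  [/\ flat_index s p q (leaf_x s) = p.1, flat_index s p q (leaf_y s) = p.2,
      flat_index s p q (leaf_z s) = q.1 & flat_index s p q (leaf_w s) = q.2].
Proof.
by case: s => [[|[|[|//]]] ?]; rewrite /flat_index !ffunE /leaf_x /leaf_y /leaf_z
  /leaf_w /= !taxon_eq.
Qed.

Definition flat_minor (K : pzRingType) m s (rf cf : 'I_m -> 'I_k * 'I_k)
    (P : {ffun 'I_4 -> 'I_k} -> K) : K :=
  \det (\matrix_(r, c) P (flat_index s (rf r) (cf c))).

Lemma eq_flat_minor (K : pzRingType) m s (rf cf : 'I_m -> 'I_k * 'I_k)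
    (P P' : {ffun 'I_4 -> 'I_k} -> K) :
  P =1 P' -> flat_minor s rf cf P = flat_minor s rf cf P'.
Proof. by move=> eP; congr (\det _); apply/matrixP => r c; rewrite !mxE. Qed.

Lemma rmorph_flat_minor (K K' : comPzRingType) (f : {rmorphism K -> K'}) m s
    (rf cf : 'I_m -> 'I_k * 'I_k) P :
  f (flat_minor s rf cf P) = flat_minor s rf cf (f \o P).
Proof.
by rewrite /flat_minor -det_map_mx; congr (\det _); apply/matrixP => r c; rewrite !mxE.
Qed.

Definition off_diagonal m (rf cf : 'I_m -> 'I_k * 'I_k) : Prop :=
  forall r c, (rf r).1 = (rf r).2 -> (cf c).1 = (cf c).2 -> (rf r).1 <> (cf c).1.

Lemma det_mulmx_eq0 (F : fieldType) m n (A : 'M[F]_(m, n)) (B : 'M_(n, m)) :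
  (n < m)%N -> \det (A *m B) = 0.
Proof.
move=> lt_nm; apply/eqP; apply: contraTT lt_nm => detAB_neq0.
have /eqP <- : row_free (A *m B) by rewrite row_free_unit unitmxE unitfE.
by rewrite -leqNgt (leq_trans (mxrankM_maxl A B)) ?rank_leq_col.
Qed.

(* Off the diagonal the GM+I matrix is (1 - delta) A B with A B factoring through
   the k states of the internal edge u -> v. *)
Lemma flat_minor_gmi_formula_eq0 (F : fieldType) m s (rf cf : 'I_m -> 'I_k * 'I_k)
    delta piI piGM (M : 'I_5 -> 'I_k -> 'I_k -> F) :
  (k < m)%N -> off_diagonal rf cf ->
  flat_minor s rf cf (gmi_formula s delta piI piGM M) = 0.
Proof.
move=> lt_km offd.
pose A := \matrix_(r < m, jv < k) \sum_(ju < k) (piGM ju * M (edge 0) ju (rf r).1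
   * M (edge 1) ju (rf r).2 * M (edge 4) ju jv).
pose B := \matrix_(jv < k, c < m) (M (edge 2) jv (cf c).1 * M (edge 3) jv (cf c).2).
rewrite /flat_minor.
suff -> : \matrix_(r < m, c < m)
    gmi_formula s delta piI piGM M (flat_index s (rf r) (cf c)) = (1 - delta) *: (A *m B).
  by rewrite detZ det_mulmx_eq0 ?mulr0.
apply/matrixP => r c; rewrite !mxE /gmi_formula.
have [ex ey ez ew] := flat_indexE s (rf r) (cf c); rewrite ex ey ez ew.
case: ifP => [/forallP all_eq | _].
  move: (all_eq (leaf_x s)) (all_eq (leaf_y s)) (all_eq (leaf_z s)) (all_eq (leaf_w s)).
  rewrite ex ey ez ew => /eqP ex0 /eqP ey0 /eqP ez0 /eqP ew0.
  by exfalso; apply: (offd r c); rewrite ?ex0 ?ey0 ?ez0 ?ew0.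
rewrite mulr0 mul0r add0r exchange_big; congr (_ * _); apply: eq_bigr => jv _.
by rewrite !mxE mulr_suml; apply: eq_bigr => ju _; rewrite !mulrA.
Qed.

Lemma flat_minor_gmi_dist_eq0 (R : realType) m s (rf cf : 'I_m -> 'I_k * 'I_k)
    (sp : gmi_param R k) :
  (k < m)%N -> off_diagonal rf cf -> flat_minor s rf cf (gmi_dist s sp) = 0.
Proof.
by move=> *; rewrite (eq_flat_minor _ _ _ (gmi_distE s sp)) flat_minor_gmi_formula_eq0.
Qed.

Lemma flat_minor_perm_neq0 (F : fieldType) m s (rf : 'I_m -> 'I_k * 'I_k)
    (g : 'I_k * 'I_k -> 'I_k * 'I_k) (P : {ffun 'I_4 -> 'I_k} -> F) (a : F) :
  a != 0 -> injective g -> injective rf ->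
  (forall p q, P (flat_index s p q) = a * (q == g p)%:R) ->
  flat_minor s rf (g \o rf) P != 0.
Proof.
move=> a_neq0 g_inj rf_inj ePg; rewrite /flat_minor.
suff -> : \matrix_(r < m, c < m) P (flat_index s (rf r) ((g \o rf) c)) = a *: 1%:M.
  by rewrite detZ det1 mulr1 expf_neq0.
apply/matrixP => r c; rewrite !mxE ePg /= (inj_eq g_inj) (inj_eq rf_inj) eq_sym.
by case: (r == c); rewrite ?mulr1 ?mulr0.
Qed.

End Flattenings.

Section CompleteVec.
Variables (K : pzRingType) (k : nat).

Definition complete_vec (u : 'I_k -> K) (j : 'I_k.+1) : K :=
  if unlift ord_max j is Some j' then u j' else 1 - \sum_j' u j'.

Lemma complete_vecE (u : 'I_k -> K) (v : 'I_k.+1 -> K) :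
  \sum_i v i = 1 -> (forall j, u j = v (widen_ord (leqnSn k) j)) ->
  complete_vec u =1 v.
Proof.
move=> sum_v1 euv j; rewrite /complete_vec; case: unliftP => [j' ->|->].
  by rewrite euv; congr v; apply: val_inj; rewrite /= /bump leqNgt ltn_ord.
by rewrite -sum_v1 big_ord_recr /= (eq_bigr _ (fun j _ => euv j)) addrC addrK.
Qed.

End CompleteVec.

Lemma rmorph_complete_vec (K K' : pzRingType) (f : {rmorphism K -> K'}) k
    (u : 'I_k -> K) j :
  f (complete_vec u j) = complete_vec (f \o u) j.
Proof.
by rewrite /complete_vec; case: unlift => //=; rewrite rmorphB rmorph1 rmorph_sum.
Qed.

Section Parametrization.
Variables (R : realType) (k : nat).
Local Notation kappa := k.+1.
Local Notation poly := {mpoly R[i][Ndim kappa]}.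

Definition coordX (c : coord_index kappa) : poly := 'X_(enum_rank c).

Definition gmi_poly (t : 'I_3) : {ffun 'I_4 -> 'I_kappa} -> poly :=
  gmi_formula t (coordX (inl tt))
    (complete_vec (fun j => coordX (inr (inl j))))
    (complete_vec (fun j => coordX (inr (inr (inl j)))))
    (fun e i => complete_vec (fun j => coordX (inr (inr (inr (e, i, j)))))).

Lemma meval_coordX (s : gmi_param R kappa) c :
  (coordX c).@[complex_point s] = (coords s c)%:C%C.
Proof. by rewrite mevalXU /complex_point enum_rankK. Qed.

Lemma meval_gmi_poly t (s : gmi_param R kappa) ii : stochastic s ->
  (gmi_poly t ii).@[complex_point s] = (gmi_dist t s ii)%:C%C.
Proof.
case=> _ [[_ sumI] [[_ sumGM] rowM]].
have complete_real (v : 'I_kappa -> R) (u : 'I_k -> poly) :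
    \sum_i v i = 1 ->
    (forall j, (u j).@[complex_point s] = (v (@free_state kappa j))%:C%C) ->
    forall j, (complete_vec u j).@[complex_point s] = (v j)%:C%C.
  move=> sum_v1 euv j; rewrite rmorph_complete_vec.
  apply: (complete_vecE (v := fun i => (v i)%:C%C)) => [|j'].
    by rewrite -(rmorph_sum (real_complex R)) sum_v1 rmorph1.
  by rewrite /= euv; congr (v _)%:C%C; apply: val_inj.
rewrite rmorph_gmi_formula gmi_distE rmorph_gmi_formula /= meval_coordX.
apply: eq_gmi_formula => [j|j|e i j] /=.
- by apply: complete_real => // j'; rewrite meval_coordX.
- by apply: complete_real => // j'; rewrite meval_coordX.
- by apply: complete_real => [|j']; [case: (rowM e i) | rewrite meval_coordX].
Qed.

Lemma meval_flat_minor t s m (rf cf : 'I_m -> 'I_kappa * 'I_kappa)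
    (sp : gmi_param R kappa) : stochastic sp ->
  (flat_minor s rf cf (gmi_poly t)).@[complex_point sp] =
  (flat_minor s rf cf (gmi_dist t sp))%:C%C.
Proof.
move=> sp_stoch; rewrite (rmorph_flat_minor (meval (complex_point sp))).
by rewrite (rmorph_flat_minor (real_complex R)); apply: eq_flat_minor => ii /=;
  rewrite meval_gmi_poly.
Qed.

End Parametrization.

Arguments gmi_poly {R k} t.

Section Variety.
Variables (R : realType) (k : nat).
Local Notation kappa := k.+1.

Definition split_minor_products (t : 'I_3) (p : {mpoly R[i][Ndim kappa]}) : Prop :=
  exists rf cf : 'I_3 -> 'I_kappa.+1 -> 'I_kappa * 'I_kappa,
    (forall s, off_diagonal (rf s) (cf s)) /\
    p = \prod_(s | s != t) flat_minor s (rf s) (cf s) (gmi_poly t).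

Lemma in_image_off_split_minors_uniq t t' X P :
  in_image_off t (zero_set (split_minor_products t)) P -> in_image_off t' X P ->
  t = t'.
Proof.
case=> sp [sp_stoch [sp_off <-]] [sp' [_ [_ eP]]].
apply/eqP; apply: contraT => neq_tt'; case: sp_off => _ [rf [cf [offd ->]]].
have minor_eq0 : (flat_minor t' (rf t') (cf t') (gmi_poly t)).@[complex_point sp] = 0.
  by rewrite meval_flat_minor // -eP flat_minor_gmi_dist_eq0 ?rmorph0.
rewrite (rmorph_prod (meval (complex_point sp))); apply/eqP/prodf_eq0.
by exists t'; [rewrite eq_sym | apply/eqP].
Qed.

End Variety.

Arguments split_minor_products {R k} t p.

Lemma addr1_neq (K : nzRingType) (x : K) : (x + 1 == x) = false.
Proof. by apply/negbTE; rewrite -[X in _ != X]addr0 (inj_eq (addrI x)) oner_neq0. Qed.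

Section Witness.
Variables (R : realType) (k : nat).
Local Notation n := k.+2.
Implicit Types (t s : 'I_3) (p q : 'I_n * 'I_n).

Definition witness_M (e : 'I_5) (i j : 'I_n) : R :=
  if e == edge 4 then n%:R^-1
  else if (e == edge 1) || (e == edge 3) then (j == i + 1)%:R else (j == i)%:R.

Definition witness : gmi_param R n :=
  GMIParam 0 (fun _ => n%:R^-1) (fun _ => n%:R^-1) witness_M.

Lemma witness_stochastic : stochastic witness.
Proof.
have uniform : prob_vector (fun _ : 'I_n => n%:R^-1 : R).
  split=> [_|]; first by rewrite invr_ge0 ler0n.
  by rewrite sumr_const card_ord -[_ *+ _]mulr_natr mulVf ?pnatr_eq0.
have indicator (a : 'I_n) : prob_vector (fun j => (j == a)%:R : R).
  split=> [j|]; first exact: ler0n.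
  by rewrite (bigD1 a) //= eqxx big1 ?addr0 // => j /negbTE->.
split; first by rewrite lexx ler01.
split; first exact: uniform.
split=> [|e i]; first exact: uniform.
rewrite /= /witness_M; case: (e == edge 4); first exact: uniform.
by case: (_ || _); apply: indicator.
Qed.

Definition witness_support t (ii : {ffun 'I_4 -> 'I_n}) : bool :=
  (ii (leaf_y t) == ii (leaf_x t) + 1) && (ii (leaf_w t) == ii (leaf_z t) + 1).

Lemma gmi_dist_witness t ii :
  gmi_dist t witness ii = n%:R^-1 * n%:R^-1 * (witness_support t ii)%:R.
Proof.
rewrite gmi_distE /gmi_formula /= !mul0r add0r subr0 mul1r.
rewrite (bigD1 (ii (leaf_x t))) //= [X in _ + X]big1 ?addr0 => [|ju]; last first.
  rewrite eq_sym => /negbTE neq; apply: big1 => jv _.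
  by rewrite /witness_M !edge_eq //= neq !(mulr0, mul0r).
rewrite (bigD1 (ii (leaf_z t))) //= [X in _ + X]big1 ?addr0 => [|jv]; last first.
  by rewrite eq_sym => /negbTE neq; rewrite /witness_M !edge_eq //= neq !(mulr0, mul0r).
rewrite /witness_M !edge_eq //= !eqxx /witness_support.
by case: (_ == _); case: (_ == _); rewrite /= !(mulr1, mulr0, mul0r).
Qed.

(* For kappa = 2 there are only two non-constant pairs, so a (kappa+1)-minor
   must use the constant row (0, 0). *)
Definition row_pairs (r : 'I_n.+1) : 'I_n * 'I_n :=
  if unlift ord0 r is Some i then (i, i + 1) else (0, 0).

Lemma row_pairs_inj : injective row_pairs.
Proof.
move=> r r'; rewrite /row_pairs.
case: unliftP => [i ->|->]; case: unliftP => [j ->|->] // /eqP; rewrite xpair_eqE.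
- by case/andP => /eqP->.
- by case/andP => /eqP->; rewrite add0r oner_eq0.
- by case/andP => /eqP<-; rewrite add0r eq_sym oner_eq0.
Qed.

Definition pair_shift (swap : bool) (a b : 'I_n) p : 'I_n * 'I_n :=
  if swap then (p.2 + a, p.1 + b) else (p.1 + a, p.2 + b).

Lemma pair_shift_inj swap a b : injective (pair_shift swap a b).
Proof.
by case: swap => -[x y] [x' y'] /= /eqP; rewrite xpair_eqE;
  case/andP => /eqP/addIr-> /eqP/addIr->.
Qed.

Lemma off_diagonal_pair_shift swap a b :
  a != 0 -> (if swap then b != a + 1 else a != b + 1) ->
  off_diagonal row_pairs (pair_shift swap a b \o row_pairs).
Proof.
move=> a_neq0 ab r c; rewrite /= /row_pairs /pair_shift.
case: (unliftP ord0 r) => [i _ /eqP|_ _]; first by rewrite eq_sym addr1_neq.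
case: (unliftP ord0 c) => [j _|_]; case: swap ab => /= ab.
- by rewrite -addrA => /addrI/eqP; rewrite addrC eq_sym (negbTE ab).
- by rewrite -addrA => /addrI/eqP; rewrite addrC (negbTE ab).
- by move=> _ /esym/eqP; rewrite add0r (negbTE a_neq0).
- by move=> _ /esym/eqP; rewrite add0r (negbTE a_neq0).
Qed.

(* Row p of the witness flattening of tree t along split s <> t has its only
   nonzero entry in column support_map t s p; the value for s = t is unused. *)
Definition support_map t s : 'I_n * 'I_n -> 'I_n * 'I_n :=
  match val t, val s with
  | 0, 1 | 1, 0 => pair_shift false 1 1
  | 0, _ => pair_shift false 1 (-1)
  | 2, 0 => pair_shift true 1 1
  | _, _ => pair_shift true (-1) 1
  end.

Lemma support_map_inj t s : injective (support_map t s).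
Proof.
by rewrite /support_map; case: (val t) => [|[|[|?]]]; case: (val s) => [|[|[|?]]];
  apply: pair_shift_inj.
Qed.

Lemma off_diagonal_support_map t s :
  off_diagonal row_pairs (support_map t s \o row_pairs).
Proof.
rewrite /support_map; case: (val t) => [|[|[|?]]]; case: (val s) => [|[|[|?]]];
  by apply: off_diagonal_pair_shift;
     rewrite ?oppr_eq0 ?oner_eq0 ?addNr // eq_sym addr1_neq.
Qed.

Lemma witness_support_flat t s p q : t != s ->
  witness_support t (flat_index s p q) = (q == support_map t s p).
Proof.
case: t s => [[|[|[|//]]] ?] [[|[|[|//]]] ?] //= _; case: p q => [p1 p2] [q1 q2];
  rewrite /witness_support /flat_index !ffunE /leaf_x /leaf_y /leaf_z /leaf_w /=
    !taxon_eq //= /support_map /pair_shift /= xpair_eqE.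
all: by rewrite ?[_ == _ - 1]eq_sym ?subr_eq // andbC.
Qed.

Lemma flat_minor_witness_neq0 t s : t != s ->
  flat_minor s row_pairs (support_map t s \o row_pairs) (gmi_dist t witness) != 0.
Proof.
move=> neq_ts; apply: (flat_minor_perm_neq0 (a := n%:R^-1 * n%:R^-1)).
- by rewrite mulf_neq0 // invr_eq0 pnatr_eq0.
- exact: support_map_inj.
- exact: row_pairs_inj.
- by move=> p q; rewrite gmi_dist_witness witness_support_flat.
Qed.

Lemma split_minor_variety_proper t :
  proper_variety (zero_set (@split_minor_products R k.+1 t)).
Proof.
split; first by exists (split_minor_products t).
exists (complex_point witness) => vanish.
pose cf s := support_map t s \o row_pairs.
have mem : @split_minor_products R k.+1 t
    (\prod_(s | s != t) flat_minor s row_pairs (cf s) (gmi_poly t)).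
  by exists (fun _ => row_pairs), cf; split=> // s; apply: off_diagonal_support_map.
move: (vanish _ mem); rewrite (rmorph_prod (meval _)) => /eqP; apply/negP/prodf_neq0.
move=> s neq_st /=; rewrite (meval_flat_minor _ _ _ _ witness_stochastic).
by rewrite (fmorph_eq0 (real_complex R)) flat_minor_witness_neq0 // eq_sym.
Qed.

End Witness.

Theorem proposition11 (R : realType) (kappa : nat) :
  (2 <= kappa)%N -> tree_generically_identifiable R kappa.
Proof.
case: kappa => [|[|k]] // _.
exists (fun t => zero_set (split_minor_products t)); split=> [t|P [t Pt]].
  exact: split_minor_variety_proper.
by exists t; split=> // t' Pt'; apply: in_image_off_split_minors_uniq Pt Pt'.
Qed.
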